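(* Let $T_1,T_2$ be tables joined on column $J$, $T_1$ having a real-valued column $W$. Fix UBS parameters $(p_1,q_1)\in(0,1]^2$ for $T_1$ and an effective sampling rate $\epsilon_2\in(0,1]$ for $T_2$ with $\epsilon_2\le p_1$. Over all UBS parameters $(p_2,q_2)$ for $T_2$ with $p_2\in[\epsilon_2,1]$ and $q_2=\epsilon_2/p_2$, the variance of $\hat J_{\mathrm{sum}}=\frac{1}{\min\{p_1,p_2\}q_1q_2}\sum_{(t_1,t_2)\in S_1\bowtie_J S_2}t_1.W$ (with $S_i=\mathrm{UBS}_{p_i,q_i}(T_i,J)$) is minimized when $p_2=p_1$ and $q_2=\epsilon_2/p_1$.
   Context: $T_1,T_2$ are finite multisets of tuples with a join attribute $J$ taking values in a finite set $\mathcal U$. $X\bowtie_J Y$ is the set of pairs $(t_1,t_2)\in X\times Y$ with $t_1.J=t_2.J$. $\mathrm{UBS}_{p,q}(T,J)$: given a hash function $h:\mathcal U\to[0,1]$, each tuple $t\in T$ with $h(t.J)<p$ is included independently with probability $q$; others are excluded. The values $h(v)$ are independent uniform on $[0,1]$, the same $h$ is used for both tables, and the Bernoulli coins are independent across all tuples and independent of $h$. *)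

From HB Require Import structures.
From mathcomp Require Import all_boot all_order all_algebra.
From mathcomp Require Import all_classical all_reals all_analysis.
Set Implicit Arguments. Unset Strict Implicit. Unset Printing Implicit Defensive.
Import Order.TTheory GRing.Theory Num.Theory.
Local Open Scope classical_set_scope.
Local Open Scope ring_scope.

Section UBS.
Context {d : measure_display} {T : measurableType d} {R : realType}.

Definition uniform01 (P : probability T R) (X : T -> R) : Prop :=
  measurable_fun setT X /\
  forall x : R, P [set w | X w < x] = (Num.max 0 (Num.min 1 x))%:E.

Definition mutually_independent (P : probability T R) {I : finType}
  (X : I -> T -> R) : Prop :=
  forall (S : {set I}) (B : I -> set R), (forall i, measurable (B i)) ->
    P (\bigcap_(i in [set i | i \in S]) (X i @^-1` B i)) =
    (\prod_(i in S) P (X i @^-1` B i))%E.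

(* the whole randomness of the two UBS samples:
   hash values h v (v in U), coin variables c1 i (tuples of T1),
   c2 j (tuples of T2); tuple i of T_k is kept by the coin iff c_k i < q_k,
   i.e. with probability q_k *)
Definition ubs_family {U : finType} {n1 n2 : nat} (h : U -> T -> R)
  (c1 : 'I_n1 -> T -> R) (c2 : 'I_n2 -> T -> R) :
  (U + 'I_n1 + 'I_n2)%type -> T -> R :=
  fun k => match k with
           | inl (inl v) => h v
           | inl (inr i) => c1 i
           | inr j => c2 j
           end.

(* indicator that a tuple with join value v and coin variable c belongs to
   UBS_{p,q} *)
Definition in_ubs (p q : R) (hv c : R) : R :=
  if (hv < p) && (c < q) then 1 else 0.

(* the estimator J_sum = 1/(min(p1,p2) q1 q2) * sum over joined sampled
   pairs of t1.W ; T1 tuple i has join value J1 i and weight W1 i,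
   T2 tuple j has join value J2 j *)
Definition Jsum_est {U : finType} {n1 n2 : nat}
  (J1 : 'I_n1 -> U) (W1 : 'I_n1 -> R) (J2 : 'I_n2 -> U)
  (h : U -> T -> R) (c1 : 'I_n1 -> T -> R) (c2 : 'I_n2 -> T -> R)
  (p1 q1 p2 q2 : R) : T -> R :=
  fun w => (Num.min p1 p2 * q1 * q2)^-1 *
    \sum_(i < n1) \sum_(j < n2)
      (if J1 i == J2 j then
         in_ubs p1 q1 (h (J1 i) w) (c1 i w) *
         in_ubs p2 q2 (h (J2 j) w) (c2 j w) * W1 i
       else 0).

End UBS.

From HB Require Import structures.
From mathcomp Require Import all_boot all_order all_algebra.
From mathcomp Require Import all_classical all_reals all_analysis.
From mathcomp.algebra_tactics Require Import ring lra.
Import Order.TTheory GRing.Theory Num.Theory.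
Local Open Scope classical_set_scope.
Local Open Scope ring_scope.

(* Both estimators are unbiased, so only their second moments matter.  The
   estimator is a combination of indicators of the events "the joined pair
   (i, j) survives both samples", and by independence its second moment is the
   quadratic form sum_{k,k'} w_k w_k' rho(k, k') in the join weights w, where
   rho = m^-[same join value] q1^-[same T1 tuple] q2^-[same T2 tuple] and
   m = min(p1, p2).  Passing from p2 = p1 to another p2 with p2 q2 = eps2
   only changes rho on pairs sharing a join value, by a nonnegative amount
   depending only on whether the T2 tuples coincide.  Grouping by join value,
   the change is sum_v f(v) ((sum_{J1 i = v} W i)^2
   + (1/q1 - 1) sum_{J1 i = v} (W i)^2) for some f >= 0. *)

Section grouped_form.
Context {R : realDomainType} {U : finType} {n : nat} (J : 'I_n -> U) (W : 'I_n -> R).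

Lemma grouped_sumE (f : U -> R) :
  \sum_(i < n) \sum_(i' < n) (if J i == J i' then W i * W i' * f (J i) else 0) =
  \sum_(v : U) f v * (\sum_(i < n | J i == v) W i) ^+ 2.
Proof.
symmetry; transitivity (\sum_(v : U) \sum_(i < n) \sum_(i' < n)
    (if (J i == v) && (J i' == v) then W i * W i' * f v else 0)).
  apply: eq_bigr => v _; rewrite expr2 big_distrl big_distrr big_mkcond /=.
  apply: eq_bigr => i _; case: (J i =P v) => _ /=; last by rewrite big1.
  rewrite !big_distrr big_mkcond /=; apply: eq_bigr => i' _ /=.
  by case: ifP => _; ring.
rewrite exchange_big /=; apply: eq_bigr => i _.
rewrite exchange_big /=; apply: eq_bigr => i' _.
rewrite (bigD1 (J i)) //= big1 ?addr0 => [|v /negbTE Jiv]; last by rewrite eq_sym Jiv.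
by rewrite eqxx eq_sym.
Qed.

Lemma grouped_form_ge0 (f : U -> R) (a b : R) :
    0 <= a <= b -> (forall v, 0 <= f v) ->
  0 <= \sum_(i < n) \sum_(i' < n) (if J i == J i' then
         W i * W i' * (if i == i' then b else a) * f (J i) else 0).
Proof.
move=> /andP[a0 ab] f0.
have splitE i i' : (if J i == J i' then
      W i * W i' * (if i == i' then b else a) * f (J i) else 0) =
    a * (if J i == J i' then W i * W i' * f (J i) else 0) +
    (b - a) * (if i == i' then W i ^+ 2 * f (J i) else 0).
  case: (eqVneq i i') => [<-|_]; first by rewrite eqxx; ring.
  by case: ifP => _; ring.
under eq_bigr => i _ do under eq_bigr => i' _ do rewrite splitE.
under eq_bigr => i _ do rewrite big_split /= -!mulr_sumr.
rewrite big_split /= -!mulr_sumr grouped_sumE.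
apply: addr_ge0; apply: mulr_ge0; rewrite ?subr_ge0 //.
  by apply: sumr_ge0 => v _; rewrite mulr_ge0 ?sqr_ge0.
apply: sumr_ge0 => i _; apply: sumr_ge0 => i' _.
by case: ifP => // _; rewrite mulr_ge0 ?sqr_ge0.
Qed.
End grouped_form.

Section join_form.
Context {R : realFieldType} {U : finType} {n1 n2 : nat}.
Context (J1 : 'I_n1 -> U) (W1 : 'I_n1 -> R) (J2 : 'I_n2 -> U).

Definition join_weight i j : R := if J1 i == J2 j then W1 i else 0.

Definition join_form (w : 'I_n1 -> 'I_n2 -> 'I_n1 -> 'I_n2 -> R) : R :=
  \sum_(i < n1) \sum_(j < n2) \sum_(i' < n1) \sum_(j' < n2)
    join_weight i j * join_weight i' j' * w i j i' j'.

(* For two joined pairs sampled with hash rate m and coin rates q1, q2, the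
   ratio P(both sampled) / (P(first sampled) P(second sampled)): every hash
   value or coin the pairs share contributes the inverse of its rate. *)
Definition overlap_weight (m q1 q2 : R) (i : 'I_n1) (j : 'I_n2) i' j' : R :=
  m ^- (J1 i == J1 i') * q1 ^- (i == i') * q2 ^- (j == j').

Lemma join_form_pairE w : join_form w =
  \sum_(kk : ('I_n1 * 'I_n2) * ('I_n1 * 'I_n2))
    join_weight kk.1.1 kk.1.2 * join_weight kk.2.1 kk.2.2 *
    w kk.1.1 kk.1.2 kk.2.1 kk.2.2.
Proof.
rewrite /join_form.
under eq_bigr => i _ do under eq_bigr => j _ do rewrite pair_bigA.
by rewrite pair_bigA pair_bigA.
Qed.

Lemma join_formB w w' :
  join_form w - join_form w' =
  join_form (fun i j i' j' => w i j i' j' - w' i j i' j').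
Proof.
rewrite -sumrB; apply: eq_bigr => i _; rewrite -sumrB; apply: eq_bigr => j _.
rewrite -sumrB; apply: eq_bigr => i' _; rewrite -sumrB; apply: eq_bigr => j' _.
by rewrite mulrBr.
Qed.

Lemma eq_join_form w w' :
    (forall i j i' j', J1 i = J2 j -> J1 i' = J2 j' ->
       w i j i' j' = w' i j i' j') ->
  join_form w = join_form w'.
Proof.
move=> ww'; apply: eq_bigr => i _; apply: eq_bigr => j _.
apply: eq_bigr => i' _; apply: eq_bigr => j' _; rewrite /join_weight.
by case: eqP => [e|_]; case: eqP => [e'|_]; rewrite ?mulr0 ?mul0r ?ww'.
Qed.

Lemma overlap_weightB (m m' q1 q2 q2' : R) i j i' j' :
    J1 i = J2 j -> J1 i' = J2 j' ->
  overlap_weight m q1 q2 i j i' j' - overlap_weight m' q1 q2' i j i' j' =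
  if J1 i == J1 i' then
    q1 ^- (i == i') * (m^-1 * q2 ^- (j == j') - m'^-1 * q2' ^- (j == j'))
  else 0.
Proof.
move=> e e'; rewrite /overlap_weight; case: eqP => [_|ne] /=; first by ring.
have /negbTE-> : i != i' by apply: contra_not_neq ne => ->.
have /negbTE-> : j != j' by apply: contra_not_neq ne => jj'; rewrite e e' jj'.
by rewrite subrr.
Qed.

Lemma join_form_ge0 (q1 : R) (delta : bool -> R) :
    0 < q1 <= 1 -> (forall b, 0 <= delta b) ->
  0 <= join_form (fun i j i' j' =>
         if J1 i == J1 i' then q1 ^- (i == i') * delta (j == j') else 0).
Proof.
move=> /andP[q1_gt0 q1_le1] delta_ge0.
pose f v := \sum_(j < n2) \sum_(j' < n2)
  (if (J2 j == v) && (J2 j' == v) then delta (j == j') else 0).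
have f_ge0 v : 0 <= f v.
  by apply: sumr_ge0 => j _; apply: sumr_ge0 => j' _; case: ifP.
rewrite (_ : join_form _ = \sum_(i < n1) \sum_(i' < n1) (if J1 i == J1 i' then
    W1 i * W1 i' * (if i == i' then q1^-1 else 1) * f (J1 i) else 0)).
  by apply: grouped_form_ge0 => //; rewrite ler01 invf_ge1.
apply: eq_bigr => i _; rewrite exchange_big; apply: eq_bigr => i' _ /=.
case: eqP => [e|_]; last first.
  by rewrite big1 // => j _; rewrite big1 // => j' _; rewrite mulr0.
rewrite /f !big_distrr; apply: eq_bigr => j _; rewrite /= !big_distrr.
apply: eq_bigr => j' _ /=; rewrite /join_weight -e !(eq_sym (J2 _)).
case: (J1 i == J2 j); case: (J1 i == J2 j'); case: (i == i');
  by rewrite /= ?expr1 ?expr0 ?invr1; ring.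
Qed.

Lemma join_form_overlap_le (m m' q1 q2 q2' : R) :
    0 < m <= m' -> 0 < q1 <= 1 -> 0 < m * q2 <= m' * q2' ->
  join_form (overlap_weight m' q1 q2') <= join_form (overlap_weight m q1 q2).
Proof.
move=> /andP[m_gt0 mm'] q1_01 /andP[mq_gt0 mq]; rewrite -subr_ge0 join_formB.
pose delta (b : bool) := m^-1 * q2 ^- b - m'^-1 * q2' ^- b.
rewrite (eq_join_form _ (fun i j i' j' =>
    if J1 i == J1 i' then q1 ^- (i == i') * delta (j == j') else 0)).
  apply: join_form_ge0 => // -[]; rewrite /delta subr_ge0 /= ?expr1 ?expr0.
    by rewrite -!invfM lef_pV2 ?posrE // (lt_le_trans mq_gt0).
  by rewrite invr1 !mulr1 lef_pV2 ?posrE // (lt_le_trans m_gt0).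
exact: overlap_weightB.
Qed.

End join_form.

Section indicator_combinations.
Context {d : measure_display} {T : measurableType d} {R : realType}.

Lemma Lfun_bounded (mu : {finite_measure set T -> \bar R}) (f : T -> R) (M r : R) :
  1 <= r -> measurable_fun setT f -> (forall x, `|f x| <= M) ->
  f \in Lfun mu r%:E.
Proof.
move=> r1 mf fM; rewrite inE/=; apply/andP; split; rewrite inE//=.
rewrite /finite_norm unlock poweR_lty//; apply/integrable_lty => //.
apply: (measurable_bounded_integrable (f := fun x => `|f x| `^ r)) => //.
- exact: fin_num_fun_lty.
- apply: (measurableT_comp (measurable_realfun.measurable_powR _)) => //.
  exact: measurableT_comp.
- exists (M `^ r); split; first exact: num_real.
  move=> y My x _ /=; rewrite ger0_norm ?powR_ge0//; apply: (le_trans _ (ltW My)).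
  have M0 : 0 <= M by exact: le_trans (fM x).
  by apply: ge0_ler_powR; rewrite ?nnegrE//; lra.
Qed.

Lemma Lfun_indic_comb (mu : {finite_measure set T -> \bar R}) (K : Type)
    (s : seq K) (a : K -> R) (A : K -> set T) (r : R) :
  1 <= r -> (forall k, measurable (A k)) ->
  (fun w => \sum_(k <- s) a k * \1_(A k) w) \in Lfun mu r%:E.
Proof.
move=> r1 mA; apply: (@Lfun_bounded _ _ (\sum_(k <- s) `|a k|)) => //.
  by apply: measurable_sum => k; apply: measurable_realfun.measurable_funM.
move=> w; rewrite (le_trans (ler_norm_sum _ _ _))// ler_sum// => k _.
by rewrite normrM ler_piMr// indicE; case: (w \in A k); rewrite ?normr1 ?normr0.
Qed.

Lemma expectation_indic_comb (P : probability T R) (K : Type)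
    (s : seq K) (a : K -> R) (A : K -> set T) :
  (forall k, measurable (A k)) ->
  ('E_P[fun w => (\sum_(k <- s) a k * \1_(A k) w)%R] =
   \sum_(k <- s) (a k)%:E * P (A k))%E.
Proof.
move=> mA; have indic_Lfun1 k : \1_(A k) \in Lfun P 1.
  apply: (@Lfun_bounded _ _ 1) => //.
  by move=> w; rewrite indicE; case: (_ \in _); rewrite ?normr1 ?normr0.
elim: s => [|k s IH].
  by under eq_fun do rewrite big_nil; rewrite big_nil expectation_cst.
under eq_fun do rewrite big_cons.
rewrite big_cons -IH -expectation_indic// -expectationZl//.
rewrite -expectationD ?Lfun_indic_comb//; last exact: Lfun_scale.
by congr expectation; apply/funext => w /=; rewrite mulrC.
Qed.

End indicator_combinations.

Section independent_uniforms.
Context {d : measure_display} {T : measurableType d} {R : realType}.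
Context (P : probability T R) {I : finType} (X : I -> T -> R).
Hypothesis X_uniform : forall k, uniform01 P (X k).
Hypothesis X_indep : mutually_independent P X.

Definition below (S : {set I}) (t : I -> R) : set T :=
  [set w | forall k, k \in S -> X k w < t k].

Lemma belowE S t :
  below S t = \bigcap_(k in [set k | k \in S]) (X k @^-1` `]-oo, t k[).
Proof.
by apply/seteqP; split => w /= wS k /wS; rewrite /= in_itv.
Qed.

Lemma belowU S S' t : below (S :|: S') t = below S t `&` below S' t.
Proof.
apply/seteqP; split => w /=.
  by move=> wS; split => k kS; apply: wS; rewrite inE kS ?orbT.
by move=> [wS wS'] k; rewrite inE => /orP[/wS|/wS'].
Qed.

Lemma measurable_below S t : measurable (below S t).
Proof.
rewrite belowE; apply: fin_bigcap_measurable; first exact: finite_finset.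
by move=> k _; rewrite -[_ @^-1` _]setTI; apply: (X_uniform k).1.
Qed.

Lemma probability_below S t : (forall k, 0 <= t k <= 1) ->
  P (below S t) = (\prod_(k in S) t k)%:E.
Proof.
move=> t01; rewrite belowE X_indep => [|k]; last exact: measurable_itv.
rewrite -prodEFin; apply: eq_bigr => k _.
have -> : X k @^-1` `]-oo, t k[ = [set w | X k w < t k].
  by apply/seteqP; split => w /=; rewrite in_itv.
by rewrite (X_uniform k).2; have /andP[t0 t1] := t01 k; rewrite min_r ?max_r.
Qed.

End independent_uniforms.

Section tagged_sets.
Context {R : realFieldType} {I1 I2 I3 : finType}.

Definition tagged_set (A : {set I1}) (B : {set I2}) (C : {set I3}) :
    {set I1 + I2 + I3} :=
  [set k | match k with
           | inl (inl x) => x \in A | inl (inr y) => y \in B | inr z => z \in C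
           end].

Definition tagged_const (x y z : R) (k : I1 + I2 + I3) : R :=
  match k with inl (inl _) => x | inl (inr _) => y | inr _ => z end.

Lemma tagged_setU A B C A' B' C' :
  tagged_set A B C :|: tagged_set A' B' C' =
  tagged_set (A :|: A') (B :|: B') (C :|: C').
Proof. by apply/setP => [[[x|y]|z]]; rewrite !inE. Qed.

Lemma prod_tagged_const x y z A B C :
  \prod_(k in tagged_set A B C) tagged_const x y z k =
  x ^+ #|A| * y ^+ #|B| * z ^+ #|C|.
Proof.
rewrite big_sumType big_sumType /= -!prodr_const.
by congr (_ * _ * _); apply: eq_bigl => ?; rewrite inE.
Qed.

End tagged_sets.

Lemma exprn_cards2 (R : unitRingType) (T : finType) (x : R) (a b : T) :
  x \is a GRing.unit -> x ^+ #|[set a; b]%SET| = x ^+ 2 * x ^- (a == b).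
Proof.
move=> xU; rewrite cards2.
by case: eqP => _; rewrite ?expr0 ?invr1 ?mulr1 ?expr1 ?mulrK.
Qed.

Section ubs_estimator.
Context {d : measure_display} {T : measurableType d} {R : realType}.
Context (P : probability T R) (U : finType) (n1 n2 : nat).
Context (h : U -> T -> R) (c1 : 'I_n1 -> T -> R) (c2 : 'I_n2 -> T -> R).
Hypothesis ubs_uniform : forall k, uniform01 P (ubs_family h c1 c2 k).
Hypothesis ubs_indep : mutually_independent P (ubs_family h c1 c2).
Context (J1 : 'I_n1 -> U) (W1 : 'I_n1 -> R) (J2 : 'I_n2 -> U).
Context (p1 q1 p2 q2 : R).
Hypotheses (p1_01 : 0 < p1 <= 1) (q1_01 : 0 < q1 <= 1).
Hypotheses (p2_01 : 0 < p2 <= 1) (q2_01 : 0 < q2 <= 1).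

Local Notation m := (Num.min p1 p2).
Local Notation pair := ('I_n1 * 'I_n2)%type.

Lemma min_rate_01 : 0 < m <= 1.
Proof.
case/andP: p1_01 => p1_gt0 p1_le1; case/andP: p2_01 => p2_gt0 _.
by rewrite lt_min p1_gt0 p2_gt0 ge_min p1_le1.
Qed.

Let m_neq0 : m != 0. Proof. by case/andP: min_rate_01 => /lt0r_neq0. Qed.
Let q1_neq0 : q1 != 0. Proof. by case/andP: q1_01 => /lt0r_neq0. Qed.
Let q2_neq0 : q2 != 0. Proof. by case/andP: q2_01 => /lt0r_neq0. Qed.

Definition pair_event (k : pair) : set T :=
  below (ubs_family h c1 c2) (tagged_set [set J1 k.1] [set k.1] [set k.2])%SET
    (tagged_const m q1 q2).

Lemma in_ubs_pair_event (i : 'I_n1) (j : 'I_n2) w : J1 i = J2 j ->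
  in_ubs p1 q1 (h (J1 i) w) (c1 i w) * in_ubs p2 q2 (h (J2 j) w) (c2 j w) =
  \1_(pair_event (i, j)) w.
Proof.
move=> <-; rewrite indicE /in_ubs.
have -> : (w \in pair_event (i, j)) =
    [&& h (J1 i) w < p1, h (J1 i) w < p2, c1 i w < q1 & c2 j w < q2].
  apply/idP/idP; rewrite inE /below /=.
    move=> wE; have := wE (inl (inl (J1 i))).
    rewrite !inE eqxx lt_min => /(_ isT) /andP[-> ->].
    have := wE (inl (inr i)); rewrite !inE eqxx => /(_ isT) ->.
    by have := wE (inr j); rewrite !inE eqxx => /(_ isT) ->.
  move=> /and4P[hp1 hp2 cq1 cq2] [[v|i']|j']; rewrite !inE /= => /eqP ->//.
  by rewrite lt_min hp1 hp2.
by do 4!case: (_ < _); rewrite /= ?mulr1 ?mulr0.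
Qed.

Lemma Jsum_estE : Jsum_est J1 W1 J2 h c1 c2 p1 q1 p2 q2 =
  fun w => \sum_(k : pair) ((m * q1 * q2)^-1 * join_weight J1 W1 J2 k.1 k.2) *
                          \1_(pair_event k) w.
Proof.
apply/funext => w; rewrite /Jsum_est pair_bigA big_distrr /=.
apply: eq_bigr => -[i j] _ /=; rewrite /join_weight.
case: eqP => [e|_]; last by rewrite !mulr0 mul0r.
by rewrite in_ubs_pair_event // -!mulrA [W1 i * _]mulrC.
Qed.

Lemma tagged_rate_01 (k : U + 'I_n1 + 'I_n2) : 0 <= tagged_const m q1 q2 k <= 1.
Proof.
have /andP[m_gt0 m_le1] := min_rate_01.
case/andP: q1_01 => q1_gt0 q1_le1; case/andP: q2_01 => q2_gt0 q2_le1.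
by case: k => [[v|i]|j]; rewrite /= ltW.
Qed.

Lemma probability_pair_event k : P (pair_event k) = (m * q1 * q2)%:E.
Proof.
by rewrite probability_below // ?prod_tagged_const ?cards1 //; exact: tagged_rate_01.
Qed.

Lemma probability_pair_eventI k k' : P (pair_event k `&` pair_event k') =
  ((m * q1 * q2) ^+ 2 * overlap_weight J1 m q1 q2 k.1 k.2 k'.1 k'.2)%:E.
Proof.
rewrite -belowU tagged_setU probability_below //; last exact: tagged_rate_01.
rewrite prod_tagged_const !exprn_cards2 ?unitfE // /overlap_weight.
by congr EFin; ring.
Qed.

Lemma expectation_Jsum_est :
  ('E_P[Jsum_est J1 W1 J2 h c1 c2 p1 q1 p2 q2] =
   (\sum_(k : pair) join_weight J1 W1 J2 k.1 k.2)%:E)%E.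
Proof.
rewrite Jsum_estE expectation_indic_comb => [|k]; last exact: measurable_below.
rewrite -sumEFin; apply: eq_bigr => k _; rewrite probability_pair_event -EFinM.
by congr EFin; field; rewrite m_neq0 q1_neq0 q2_neq0.
Qed.

Lemma Jsum_est_sqrE : Jsum_est J1 W1 J2 h c1 c2 p1 q1 p2 q2 ^+ 2 =
  fun w => \sum_(kk : pair * pair) ((m * q1 * q2) ^- 2 *
     join_weight J1 W1 J2 kk.1.1 kk.1.2 * join_weight J1 W1 J2 kk.2.1 kk.2.2) *
     \1_(pair_event kk.1 `&` pair_event kk.2) w.
Proof.
rewrite Jsum_estE exprfctE; apply/funext => w.
rewrite expr2 big_distrl; under eq_bigr do rewrite big_distrr.
rewrite pair_bigA; apply: eq_bigr => -[k k'] _.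
by rewrite indicI /= -exprVn; ring.
Qed.

Lemma second_moment_Jsum_est :
  ('E_P[Jsum_est J1 W1 J2 h c1 c2 p1 q1 p2 q2 ^+ 2] =
   (join_form J1 W1 J2 (overlap_weight J1 m q1 q2))%:E)%E.
Proof.
rewrite Jsum_est_sqrE expectation_indic_comb => [|kk]; last first.
  by apply: measurableI; exact: measurable_below.
rewrite join_form_pairE -sumEFin; apply: eq_bigr => -[[i j] [i' j']] _ /=.
rewrite probability_pair_eventI -EFinM.
by congr EFin; field; rewrite m_neq0 q1_neq0 q2_neq0.
Qed.

Lemma variance_Jsum_est : 'V_P[Jsum_est J1 W1 J2 h c1 c2 p1 q1 p2 q2] =
  (join_form J1 W1 J2 (overlap_weight J1 m q1 q2) -
   (\sum_(k : pair) join_weight J1 W1 J2 k.1 k.2) ^+ 2)%:E.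
Proof.
rewrite varianceE; last first.
  rewrite Jsum_estE; apply: Lfun_indic_comb => [|k]; first exact: ler1n.
  exact: measurable_below.
by rewrite second_moment_Jsum_est expectation_Jsum_est EFinB EFin_expe.
Qed.

End ubs_estimator.

Theorem lemma6 (d : measure_display) (T : measurableType d) (R : realType)
  (P : probability T R) (U : finType) (n1 n2 : nat)
  (J1 : 'I_n1 -> U) (W1 : 'I_n1 -> R) (J2 : 'I_n2 -> U)
  (h : U -> T -> R) (c1 : 'I_n1 -> T -> R) (c2 : 'I_n2 -> T -> R)
  (p1 q1 eps2 : R) :
  (forall k, uniform01 P (ubs_family h c1 c2 k)) ->
  mutually_independent P (ubs_family h c1 c2) ->
  0 < p1 <= 1 -> 0 < q1 <= 1 -> 0 < eps2 <= 1 -> eps2 <= p1 ->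
  forall p2 : R, eps2 <= p2 <= 1 ->
    ('V_P[Jsum_est J1 W1 J2 h c1 c2 p1 q1 p1 (eps2 / p1)]
     <= 'V_P[Jsum_est J1 W1 J2 h c1 c2 p1 q1 p2 (eps2 / p2)])%E.
Proof.
move=> uniform indep p1_01 q1_01 /andP[eps2_gt0 _] eps2_p1 p2 /andP[eps2_p2 p2_le1].
have [p1_gt0 _] := andP p1_01.
have p2_gt0 : 0 < p2 := lt_le_trans eps2_gt0 eps2_p2.
have m_gt0 : 0 < Num.min p1 p2 by rewrite lt_min p1_gt0.
have m_le_p2 : Num.min p1 p2 <= p2 by rewrite ge_min lexx orbT.
have rate2_01 p : 0 < p -> eps2 <= p -> 0 < eps2 / p <= 1.
  by move=> p_gt0 eps2_p; rewrite divr_gt0 // ler_pdivrMr // mul1r.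
rewrite !variance_Jsum_est ?p2_gt0 ?rate2_01 // lee_fin lerD2r minxx.
apply: join_form_overlap_le => //; first by rewrite m_gt0 ge_min lexx.
rewrite [p1 * _]mulrC divfK ?gt_eqF // mulr_gt0 ?divr_gt0 //= mulrA.
by rewrite ler_pdivrMr // mulrC ler_wpM2l // ltW.
Qed.
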